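(* Let $e$ be an environment with binary treatment $T^e$ and covariates $X^e$. Let $\Phi(T,X)$ be a representation, and define the covariate representation $$\Phi(X^e)=\{\Phi(1,X^e),\Phi(0,X^e)\}.$$ Let $\epsilon>0$. Suppose that $\epsilon \le P(T^e=1\mid X^e)\le 1-\epsilon$ with probability 1. Then $\epsilon\le P(T^e=1\mid \Phi(X^e))\le 1-\epsilon$ with probability 1.
   Context: A representation is a (measurable) function $\Phi(T,X)$ of the treatment and the covariates. *)

From HB Require Import structures.
From mathcomp Require Import all_boot all_order all_algebra.
From mathcomp Require Import all_classical all_reals all_analysis.
Set Implicit Arguments. Unset Strict Implicit. Unset Printing Implicit Defensive.
Import Order.TTheory GRing.Theory Num.Theory.
Local Open Scope classical_set_scope.
Local Open Scope ring_scope.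

(* [g] is a version of the conditional probability P(A | Y), written as a
   measurable function of Y (factorization / Doob-Dynkin form):
   g is measurable, g o Y is P-integrable, and for every measurable B,
   \int_{Y^{-1} B} g(Y) dP = P(Y^{-1} B /\ A). *)
Definition is_cond_prob_version (d d' : measure_display) (R : realType)
  (Omega : measurableType d) (P : probability Omega R)
  (S : measurableType d') (Y : Omega -> S) (A : set Omega) (g : S -> R) : Prop :=
  [/\ measurable_fun setT g,
      P.-integrable setT (fun w => (g (Y w))%:E) &
      forall B : set S, measurable B ->
        (\int[P]_(w in Y @^-1` B) (g (Y w))%:E = P (Y @^-1` B `&` A))%E].

From HB Require Import structures.
From mathcomp Require Import all_boot all_order all_algebra.
From mathcomp Require Import all_classical all_reals all_analysis.
From mathcomp Require Import measurable_realfun.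
Import Order.TTheory GRing.Theory Num.Theory.
Local Open Scope classical_set_scope.
Local Open Scope ring_scope.

(* Since [Phi(X)] is a measurable function [f] of [X], every set
   [{Phi(X) \in B}] is also of the form [{X \in f^-1 B}], so a version [h] of
   [P(T = 1 | Phi(X))] and a version [g] of [P(T = 1 | X)] have the same
   integral over each such set.  On [{h(Phi(X)) < eps}] we have
   [h(Phi(X)) < eps <= g(X)] almost surely, so equality of the integrals
   forces this set to be null; symmetrically for [{h(Phi(X)) > 1 - eps}]. *)

Lemma integral_eq_ae_lt_negligible {d} {T : measurableType d} {R : realType}
    {mu : {measure set T -> \bar R}} {C : set T} {u v : T -> R} :
  measurable C ->
  mu.-integrable C (EFin \o u) -> mu.-integrable C (EFin \o v) ->
  (\int[mu]_(x in C) (u x)%:E = \int[mu]_(x in C) (v x)%:E)%E ->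
  {ae mu, forall x, C x -> u x < v x} ->
  mu.-negligible C.
Proof.
move=> mC iu iv eq_uv uv.
have mvu : measurable_fun C (EFin \o (fun x => v x - u x)).
  by apply/measurable_EFinP/measurable_funB; apply/measurable_EFinP;
    [exact: measurable_int iv | exact: measurable_int iu].
have int_vu0 : (\int[mu]_(x in C) (v x - u x)%:E = 0)%E.
  under eq_integral do rewrite EFinB.
  by rewrite integralB_EFin // -eq_uv subee //; exact: integrable_fin_num iu.
have int_abs_vu0 : (\int[mu]_(x in C) `|(v x - u x)%:E| = 0)%E.
  rewrite -int_vu0; apply: ae_eq_integral => //; first exact: measurableT_comp.
  apply: filterS uv => x uvx Cx.
  by rewrite gee0_abs // lee_fin subr_ge0 ltW // uvx.
have vu0 := (ae_eq_integral_abs mu mC mvu).1 int_abs_vu0.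
have [N [mN N0 notCN]] : {ae mu, forall x, ~ C x}.
  apply: filterS2 uv vu0 => x uvx vux Cx.
  move: (uvx Cx); rewrite -subr_gt0.
  by have [->] := vux Cx; rewrite ltxx.
by exists N; split => // x Cx; apply: notCN => /=; apply.
Qed.

Section cond_prob_version_comp.
Variables (d dX dZ : measure_display) (R : realType).
Variables (Omega : measurableType d) (P : probability Omega R).
Variables (Xs : measurableType dX) (Zs : measurableType dZ).
Variables (X : Omega -> Xs) (f : Xs -> Zs) (A : set Omega).
Variables (g : Xs -> R) (h : Zs -> R).
Hypotheses (mX : measurable_fun setT X) (mf : measurable_fun setT f).
Hypotheses (hg : is_cond_prob_version P X A g).
Hypotheses (hh : is_cond_prob_version P (f \o X) A h).

Let measurable_preimage_fX {B} : measurable B -> measurable ((f \o X) @^-1` B).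
Proof.
by move=> mB; rewrite -[_ @^-1` _]setTI; exact: measurableT_comp.
Qed.

Lemma cond_prob_version_comp_integral {B} : measurable B ->
  (\int[P]_(w in (f \o X) @^-1` B) (h (f (X w)))%:E =
   \int[P]_(w in (f \o X) @^-1` B) (g (X w))%:E)%E.
Proof.
case: hg hh => _ _ intg [_ _ inth] mB.
rewrite inth // comp_preimage intg //.
by rewrite -[_ @^-1` _]setTI; exact: mf.
Qed.

Let negligible_preimage {B} {u v : Omega -> R} : measurable B ->
  P.-integrable setT (fun w => (u w)%:E) ->
  P.-integrable setT (fun w => (v w)%:E) ->
  (\int[P]_(w in (f \o X) @^-1` B) (u w)%:E =
   \int[P]_(w in (f \o X) @^-1` B) (v w)%:E)%E ->
  {ae P, forall w, B (f (X w)) -> u w < v w} ->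
  {ae P, forall w, ~ B (f (X w))}.
Proof.
move=> mB iu iv eq_uv uv.
have mC := measurable_preimage_fX mB.
have /negligibleS := integral_eq_ae_lt_negligible mC
  (integrableS measurableT mC (subsetT _) iu)
  (integrableS measurableT mC (subsetT _) iv) eq_uv uv.
by apply => w /= /contrapT.
Qed.

Lemma cond_prob_version_comp_ae_bound (a b : R) :
  {ae P, forall w, a <= g (X w) <= b} -> {ae P, forall w, a <= h (f (X w)) <= b}.
Proof.
case: hg hh => _ ig _ [mh ih _] gab.
have mtrue : measurable [set true] by [].
have mlt (k l : Zs -> R) : measurable_fun setT k -> measurable_fun setT l ->
    measurable [set z | k z < l z].
  move=> mk ml.
  by have := measurable_fun_ltr mk ml measurableT mtrue; rewrite setTI.
have mB1 : measurable [set z | h z < a] := mlt _ _ mh (measurable_cst a).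
have mB2 : measurable [set z | b < h z] := mlt _ _ (measurable_cst b) mh.
have h_ge : {ae P, forall w, ~ h (f (X w)) < a}.
  apply: (negligible_preimage mB1 ih ig (cond_prob_version_comp_integral mB1)).
  by apply: filterS gab => w /andP[aw _] /lt_le_trans; apply.
have h_le : {ae P, forall w, ~ b < h (f (X w))}.
  apply: (negligible_preimage mB2 ig ih).
    exact: esym (cond_prob_version_comp_integral mB2).
  by apply: filterS gab => w /andP[_ wb] /(le_lt_trans wb).
apply: filterS2 h_ge h_le => w /negP; rewrite -leNgt => -> /negP.
by rewrite -leNgt.
Qed.

End cond_prob_version_comp.

Theorem theorem2 (d dX dZ : measure_display) (R : realType)
  (Omega : measurableType d) (P : probability Omega R)
  (Xs : measurableType dX) (Zs : measurableType dZ)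
  (T : Omega -> bool) (X : Omega -> Xs) (Phi : bool -> Xs -> Zs) (eps : R) :
  0 < eps ->
  measurable_fun setT T ->
  measurable_fun setT X ->
  measurable_fun setT (fun p : bool * Xs => Phi p.1 p.2) ->
  forall g : Xs -> R,
    is_cond_prob_version P X (T @^-1` [set true]) g ->
    {ae P, forall w, eps <= g (X w) <= 1 - eps} ->
  forall h : Zs * Zs -> R,
    is_cond_prob_version P (fun w => (Phi true (X w), Phi false (X w)))
      (T @^-1` [set true]) h ->
    {ae P, forall w, eps <= h (Phi true (X w), Phi false (X w)) <= 1 - eps}.
Proof.
move=> _ _ mX mPhi g hg g_bound h hh.
have mPhi_at t : measurable_fun setT (Phi t).
  exact: measurableT_comp mPhi (pair1_measurable t).
have mPhiX : measurable_fun setT (fun x => (Phi true x, Phi false x)).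
  exact: measurable_fun_pair (mPhi_at true) (mPhi_at false).
exact: cond_prob_version_comp_ae_bound mX mPhiX hg hh _ _ g_bound.
Qed.
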